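(* Suppose $R:\mathcal{A}\to\mathcal{B}$ has a monadic decomposition of monadic length $N\in\mathbb{N}$, with categories $\mathcal{B}_0=\mathcal{B},\mathcal{B}_1,\dots,\mathcal{B}_N$ and functors $R_n:\mathcal{A}\to\mathcal{B}_n$, and let $n\in\{0,\dots,N\}$. Let $U_{0,n}=U_{0,1}\circ U_{1,2}\circ\cdots\circ U_{n-1,n}:\mathcal{B}_n\to\mathcal{B}$ be the composite forgetful functor ($U_{0,0}=\mathrm{Id}$). Then: 1) $\mathrm{Im}R\subseteq\mathrm{Im}U_{0,n}$; 2) $\mathrm{Im}R=\mathrm{Im}U_{0,n}$ whenever $R_n$ is essentially surjective; 3) $\mathrm{Im}R=\mathrm{Im}U_{0,N}$.
   Context: For an adjunction $(L_n,R_n)$ with $R_n:\mathcal{A}\to\mathcal{B}_n$, unit $\eta_n$ and counit $\epsilon_n$, $\mathcal{B}_{n+1}$ is the Eilenberg–Moore category of the monad $(R_nL_n,R_n\epsilon_nL_n,\eta_n)$, $U_{n,n+1}:\mathcal{B}_{n+1}\to\mathcal{B}_n$ is its forgetful functor, and the comparison functor is $R_{n+1}:\mathcal{A}\to\mathcal{B}_{n+1}$, $R_{n+1}Y=(R_nY,R_n\epsilon_nY)$, $R_{n+1}f=R_nf$ (so $U_{n,n+1}R_{n+1}=R_n$). $R$ has a monadic decomposition of monadic length $N$ if there are functors $(R_n)_{0\le n\le N}$ with $R_0=R$, each $R_n$ having a left adjoint $L_n$, $R_{n+1}$ the comparison functor of $(L_n,R_n)$ for $n<N$, $L_N$ full and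 faithful and $L_n$ not full and faithful for $n<N$. For a functor $F:\mathcal{C}\to\mathcal{D}$, $\mathrm{Im}F$ is the full subcategory of $\mathcal{D}$ of objects isomorphic to $FC$ for some $C\in\mathcal{C}$; $F$ is essentially surjective if $\mathrm{Im}F=\mathcal{D}$. *)

From Stdlib Require Import ProofIrrelevance.

Set Implicit Arguments.

(** Categories, with Leibniz equality of morphisms. [comp g f] is "g after f". *)
Record Category := {
  Ob :> Type;
  Hom : Ob -> Ob -> Type;
  idm : forall x, Hom x x;
  comp : forall x y z, Hom y z -> Hom x y -> Hom x z;
  comp_id_l : forall x y (f : Hom x y), comp (idm y) f = f;
  comp_id_r : forall x y (f : Hom x y), comp f (idm x) = f;
  comp_assoc : forall x y z w (h : Hom z w) (g : Hom y z) (f : Hom x y),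
      comp h (comp g f) = comp (comp h g) f
}.
Arguments Hom {c} x y.
Arguments idm {c} x.
Arguments comp {c x y z} g f.

Record Functor (C D : Category) := {
  fobj :> C -> D;
  fmap : forall x y, Hom x y -> Hom (fobj x) (fobj y);
  fmap_id : forall x : C, fmap x x (@idm C x) = @idm D (fobj x);
  fmap_comp : forall x y z (g : Hom y z) (f : Hom x y),
      fmap x z (@comp C x y z g f) = @comp D _ _ _ (fmap y z g) (fmap x y f)
}.
Arguments fmap {C D} f0 {x y} f.

Definition IdF (C : Category) : Functor C C.
Proof.
  refine {| fobj := fun x => x; fmap := fun x y f => f |}; reflexivity.
Defined.

Definition CompF (C D E : Category) (G : Functor D E) (F : Functor C D)
  : Functor C E.
Proof.
  refine {| fobj := fun x => G (F x); fmap := fun x y f => fmap G (fmap F f) |}.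
  - intro x; rewrite !fmap_id; reflexivity.
  - intros; rewrite !fmap_comp; reflexivity.
Defined.

Definition isomorphic (C : Category) (x y : C) : Prop :=
  exists (f : Hom x y) (g : Hom y x), comp g f = idm x /\ comp f g = idm y.

Definition InIm (C D : Category) (F : Functor C D) (d : D) : Prop :=
  exists c : C, @isomorphic D (F c) d.

Definition ess_surj (C D : Category) (F : Functor C D) : Prop :=
  forall d : D, InIm F d.

Definition fully_faithful (C D : Category) (F : Functor C D) : Prop :=
  forall x y : C, exists g : Hom (F x) (F y) -> Hom x y,
    (forall f, g (fmap F f) = f) /\ (forall h, fmap F (g h) = h).

Record Adjunction (A B : Category) (R : Functor A B) := {
  adjL : Functor B A;
  eta : forall b : B, Hom b (R (adjL b));
  eps : forall a : A, Hom (adjL (R a)) a;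
  eta_nat : forall b b' (f : Hom b b'),
      comp (eta b') f = comp (fmap R (fmap adjL f)) (eta b);
  eps_nat : forall a a' (f : Hom a a'),
      comp f (eps a) = comp (eps a') (fmap adjL (fmap R f));
  tri_L : forall b, comp (eps (adjL b)) (fmap adjL (eta b)) = idm (adjL b);
  tri_R : forall a, comp (fmap R (eps a)) (eta (R a)) = idm (R a)
}.
Arguments adjL {A B R} a : rename.
Arguments eta {A B R} a b : rename.
Arguments eps {A B R} a a0 : rename.

Section EM.
Variables (A B : Category) (R : Functor A B) (adj : Adjunction R).
Let L := adjL adj.

(** Algebras for the monad (R L, R eps L, eta). *)
Record EMOb := {
  carrier : B;
  act : Hom (R (L carrier)) carrier;
  act_unit : comp act (eta adj carrier) = idm carrier;
  act_assoc : comp act (fmap R (fmap L act))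
              = comp act (fmap R (eps adj (L carrier)))
}.

Definition EMHom (X Y : EMOb) : Type :=
  { f : Hom (carrier X) (carrier Y)
  | comp f (act X) = comp (act Y) (fmap R (fmap L f)) }.

Lemma EMHom_eq (X Y : EMOb) (f g : EMHom X Y) : proj1_sig f = proj1_sig g -> f = g.
Proof.
  destruct f as [f Hf], g as [g Hg]; simpl; intros ->.
  f_equal; apply proof_irrelevance.
Qed.

Definition EMid (X : EMOb) : EMHom X X.
Proof.
  exists (idm (carrier X)).
  rewrite !fmap_id, comp_id_l, comp_id_r; reflexivity.
Defined.

Definition EMcomp (X Y Z : EMOb) (g : EMHom Y Z) (f : EMHom X Y) : EMHom X Z.
Proof.
  exists (comp (proj1_sig g) (proj1_sig f)).
  destruct g as [g Hg], f as [f Hf]; simpl.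
  rewrite <- comp_assoc, Hf, comp_assoc, Hg, <- comp_assoc, <- fmap_comp,
    <- fmap_comp; reflexivity.
Defined.

Definition EMCat : Category.
Proof.
  refine {| Ob := EMOb; Hom := EMHom; idm := EMid; comp := EMcomp |}.
  - intros; apply EMHom_eq; simpl; apply comp_id_l.
  - intros; apply EMHom_eq; simpl; apply comp_id_r.
  - intros; apply EMHom_eq; simpl; apply comp_assoc.
Defined.

Definition Forget : Functor EMCat B.
Proof.
  refine {| fobj := fun X : EMCat => carrier X;
            fmap := fun X Y (f : @Hom EMCat X Y) => proj1_sig f |};
  reflexivity.
Defined.

Definition cmp_ob (Y : A) : EMOb.
Proof.
  refine {| carrier := R Y; act := fmap R (eps adj Y) |}.
  - apply (tri_R adj).
  - rewrite <- !fmap_comp, <- (eps_nat adj); reflexivity.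
Defined.

Lemma cmp_hom_ok (Y Y' : A) (f : Hom Y Y') :
  comp (fmap R f) (act (cmp_ob Y))
  = comp (act (cmp_ob Y')) (fmap R (fmap L (fmap R f))).
Proof.
  simpl. rewrite <- !fmap_comp. f_equal. apply (eps_nat adj).
Qed.

Definition Comparison : Functor A EMCat.
Proof.
  refine (Build_Functor A EMCat (cmp_ob : A -> EMCat)
            (fun Y Y' f => exist _ (fmap R f) (@cmp_hom_ok Y Y' f)) _ _).
  - intros; apply EMHom_eq; simpl; apply fmap_id.
  - intros; apply EMHom_eq; simpl; apply fmap_comp.
Defined.

End EM.

(** At each stage R_n has a chosen left adjoint L_n; if n < N,
    L_n is not fully faithful and the next stage is the comparison functor
    R_{n+1} : A -> B_{n+1} = Eilenberg-Moore category of (L_n, R_n);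
    at stage N, L_N is fully faithful. *)
Inductive MonadicDecomp (A : Category) : forall B : Category, Functor A B -> nat -> Type :=
| MD_stop : forall (B : Category) (R : Functor A B) (adj : Adjunction R),
    fully_faithful (adjL adj) -> MonadicDecomp R 0
| MD_step : forall (B : Category) (R : Functor A B) (adj : Adjunction R) (N : nat),
    ~ fully_faithful (adjL adj) ->
    MonadicDecomp (Comparison adj) N -> MonadicDecomp R (S N).

(** Stage n of a decomposition: the category B_n, the functor R_n : A -> B_n,
    and the composite forgetful functor U_{0,n} : B_n -> B (U_{0,0} = Id).
    (For n > N it returns stage N; only n <= N is used.) *)
Record Stage (A B : Category) := {
  stCat : Category;
  stR : Functor A stCat;
  stU : Functor stCat B
}.

Fixpoint stage (A B : Category) (R : Functor A B) (N : nat)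
  (d : MonadicDecomp R N) (n : nat) {struct d} : Stage A B :=
  match d in @MonadicDecomp _ B0 R0 _ return Stage A B0 with
  | @MD_stop _ B0 R0 adj _ => {| stCat := B0; stR := R0; stU := IdF B0 |}
  | @MD_step _ B0 R0 adj _ _ rest =>
      match n with
      | 0 => {| stCat := B0; stR := R0; stU := IdF B0 |}
      | S m =>
          let s := stage rest m in
          {| stCat := stCat s; stR := stR s;
             stU := CompF (Forget adj) (stU s) |}
      end
  end.


(** The whole argument rests on one observation: for every stage n the
    composite forgetful functor U_{0,n} : B_n -> B recovers R from R_n on the
    nose, U_{0,n} (R_n c) = R c, because each comparison functor R_{k+1}
    satisfies U_{k,k+1} R_{k+1} = R_k ([stage_forget_comparison]).

    For any factorisation R = U o F (objectwise) we get Im R ⊆ Im U, and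
    Im U ⊆ Im R as soon as F is essentially surjective, since functors
    preserve isomorphisms ([image_factor_incl], [image_factor_eq]); this gives
    parts 1) and 2).  For part 3), the last functor R_N has a fully faithful
    left adjoint L_N, so its unit is invertible and R_N is essentially
    surjective ([ff_left_adjoint_ess_surj]); part 2) at n = N concludes. *)

Section Isomorphisms.
Context {C : Category}.

Lemma iso_sym {x y : C} : @isomorphic C x y -> @isomorphic C y x.
Proof. intros [f [g [Hgf Hfg]]]; exists g, f; split; assumption. Qed.

Lemma iso_trans {x y z : C} :
  @isomorphic C x y -> @isomorphic C y z -> @isomorphic C x z.
Proof.
  intros [f [g [Hgf Hfg]]] [f' [g' [Hgf' Hfg']]].
  exists (comp f' f), (comp g g'); split.
  - rewrite comp_assoc, <- (@comp_assoc C _ _ _ _ g), Hgf', comp_id_r.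
    exact Hgf.
  - rewrite comp_assoc, <- (@comp_assoc C _ _ _ _ f'), Hfg, comp_id_r.
    exact Hfg'.
Qed.

End Isomorphisms.

Lemma iso_fmap {C D : Category} (F : Functor C D) {x y : C} :
  @isomorphic C x y -> @isomorphic D (F x) (F y).
Proof.
  intros [f [g [Hgf Hfg]]]; exists (fmap F f), (fmap F g); split;
    rewrite <- fmap_comp; [rewrite Hgf | rewrite Hfg]; apply fmap_id.
Qed.

Section ImageOfFactorisation.
Context {A C B : Category} (F : Functor A C) (U : Functor C B)
  (R : Functor A B).
Hypothesis factor : forall a : A, U (F a) = R a.

Lemma image_factor_incl (b : B) : InIm R b -> InIm U b.
Proof. intros [a Ha]; exists (F a); rewrite factor; exact Ha. Qed.

Lemma image_factor_eq :
  ess_surj F -> forall b : B, InIm R b <-> InIm U b.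
Proof.
  intros HF b; split; [apply image_factor_incl|].
  intros [c Hc]; destruct (HF c) as [a Ha].
  exists a; rewrite <- factor.
  exact (iso_trans (iso_fmap U Ha) Hc).
Qed.

End ImageOfFactorisation.

Lemma ff_faithful {C D : Category} {F : Functor C D} :
  fully_faithful F -> forall (x y : C) (f g : Hom x y),
  fmap F f = fmap F g -> f = g.
Proof.
  intros F_ff x y f g Hfg; destruct (F_ff x y) as [inv [inv_fmap _]].
  rewrite <- (inv_fmap f), <- (inv_fmap g), Hfg; reflexivity.
Qed.

Section FullyFaithfulLeftAdjoint.
Context {A B : Category} {R : Functor A B} {adj : Adjunction R}.
Let L := adjL adj.
Hypothesis L_ff : fully_faithful L.

(** When the left adjoint is fully faithful, the unit eta_b is an
    isomorphism; its inverse is the preimage under L of eps_{L b}. *)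
Lemma ff_left_adjoint_unit_iso (b : B) : @isomorphic B b (R (L b)).
Proof.
  destruct (L_ff (R (L b)) b) as [inv [_ fmap_inv]].
  set (k := inv (eps adj (L b))).
  exists (eta adj b), k; split.
  - apply (ff_faithful L_ff).
    rewrite fmap_comp, fmap_id; unfold k; rewrite fmap_inv.
    apply (tri_L adj).
  - rewrite (eta_nat adj); unfold k; rewrite fmap_inv.
    apply (tri_R adj).
Qed.

Lemma ff_left_adjoint_ess_surj : ess_surj R.
Proof.
  intro b; exists (L b); apply iso_sym, ff_left_adjoint_unit_iso.
Qed.

End FullyFaithfulLeftAdjoint.

Lemma stage_forget_comparison {A B : Category} {R : Functor A B} {N : nat}
  (d : MonadicDecomp R N) (n : nat) (a : A) :
  stU (stage d n) (stR (stage d n) a) = R a.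
Proof.
  revert n; induction d as [B' R' adj L_ff | B' R' adj N' L_not_ff d IH];
    intros [|m]; try reflexivity.
  simpl; rewrite IH; reflexivity.
Qed.

Lemma last_stage_ff_left_adjoint {A B : Category} {R : Functor A B} {N : nat}
  (d : MonadicDecomp R N) :
  exists adj : Adjunction (stR (stage d N)), fully_faithful (adjL adj).
Proof.
  induction d as [B' R' adj L_ff | B' R' adj N' L_not_ff d IH].
  - exists adj; exact L_ff.
  - exact IH.
Qed.

Theorem proposition1p13 (A B : Category) (R : Functor A B) (N : nat)
  (d : MonadicDecomp R N) (n : nat) (Hn : n <= N) :
  (forall b : B, InIm R b -> InIm (stU (stage d n)) b) /\
  (ess_surj (stR (stage d n)) ->
     forall b : B, InIm R b <-> InIm (stU (stage d n)) b) /\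
  (forall b : B, InIm R b <-> InIm (stU (stage d N)) b).
Proof.
  split; [|split].
  - apply image_factor_incl with (F := stR (stage d n)).
    apply stage_forget_comparison.
  - apply (image_factor_eq (stR (stage d n))), stage_forget_comparison.
  - apply (image_factor_eq (stR (stage d N))); [apply stage_forget_comparison|].
    destruct (last_stage_ff_left_adjoint d) as [adj L_ff].
    exact (ff_left_adjoint_ess_surj L_ff).
Qed.
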